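(* The $q$-Schröder numbers $r_n(q)=\sum_{k=0}^n\binom{n+k}{n-k}C_kq^{n-k}$, $n\ge0$, where $C_k=\frac{1}{k+1}\binom{2k}{k}$ is the $k$-th Catalan number, form a $q$-log-convex sequence.
   Context: For real polynomials $f,g$ write $f\le_q g$ if $g-f$ has nonnegative coefficients; a sequence $\{P_n(q)\}_{n\ge0}$ is $q$-log-convex if $P_n(q)^2\le_q P_{n-1}(q)P_{n+1}(q)$ for all $n\ge 1$. *)

From mathcomp Require Import all_boot all_order all_algebra.
Set Implicit Arguments. Unset Strict Implicit. Unset Printing Implicit Defensive.
Import Order.TTheory GRing.Theory Num.Theory.
Local Open Scope ring_scope.

(* Catalan number C_k = binom(2k,k)/(k+1) (exact division in nat). *)
Definition catalan (k : nat) : nat := ('C(k.*2, k) %/ k.+1)%N.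

Definition qschroeder (n : nat) : {poly int} :=
  \sum_(0 <= k < n.+1) (('C(n + k, n - k) * catalan k)%N)%:R *: 'X^(n - k).

Definition qle (R : numDomainType) (f g : {poly R}) : Prop :=
  forall i : nat, 0 <= (g - f)`_i.

Definition q_log_convex (R : numDomainType) (P : nat -> {poly R}) : Prop :=
  forall n : nat, (1 <= n)%N -> qle (P n ^+ 2) (P n.-1 * P n.+1).

From mathcomp Require Import all_boot all_order all_algebra.
From mathcomp Require Import ring zify.
Set Implicit Arguments. Unset Strict Implicit. Unset Printing Implicit Defensive.
Import Order.TTheory GRing.Theory Num.Theory.
Local Open Scope ring_scope.

(* The q-Schroeder numbers form the 0th column of the triangle T whose rows are
   generated by the production matrix P with entries 1 + q on and below the
   diagonal, 1 on the superdiagonal and 0 above: T(n+1, -) = T(n, -) P.  This is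
   checked through an explicit formula for the coefficients of T(n, h), as
   products of a binomial coefficient and a ballot number.  All 2x2 minors of P
   have nonnegative coefficients, so by the Cauchy-Binet formula so do the 2x2
   minors of two consecutive rows of T.  A second application of Cauchy-Binet,
   to the columns e_0 and P(-, 0), writes r_(n-1) r_(n+1) - r_n^2 as a sum of
   such minors times polynomials with nonnegative coefficients. *)

Section NonnegPoly.
Variable R : numDomainType.
Implicit Types p q : {poly R}.

Definition poly_nneg p := forall i, 0 <= p`_i.

Lemma poly_nneg0 : poly_nneg 0. Proof. by move=> i; rewrite coef0. Qed.
Lemma poly_nneg1 : poly_nneg 1. Proof. by move=> i; rewrite coef1 ler0n. Qed.
Lemma poly_nnegX : poly_nneg 'X. Proof. by move=> i; rewrite coefX ler0n. Qed.

Lemma poly_nnegD p q : poly_nneg p -> poly_nneg q -> poly_nneg (p + q).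
Proof. by move=> hp hq i; rewrite coefD addr_ge0. Qed.

Lemma poly_nnegM p q : poly_nneg p -> poly_nneg q -> poly_nneg (p * q).
Proof.
by move=> hp hq i; rewrite coefM; apply: sumr_ge0 => j _; apply: mulr_ge0.
Qed.

Lemma poly_nneg_sum (I : Type) (r : seq I) (Pr : pred I) (F : I -> {poly R}) :
  (forall i, Pr i -> poly_nneg (F i)) -> poly_nneg (\sum_(i <- r | Pr i) F i).
Proof.
by move=> hF; elim/big_ind: _ => //; [apply: poly_nneg0 | apply: poly_nnegD].
Qed.

End NonnegPoly.

Lemma sum_ord_mul_delta (R : nzRingType) N (F : nat -> R) k :
  ((N <= k)%N -> F k = 0) -> \sum_(i < N) F i * (i == k :> nat)%:R = F k.
Proof.
move=> F_supp; case: (ltnP k N) => [kN | Nk].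
  rewrite (bigD1 (Ordinal kN)) //= eqxx mulr1 big1 ?addr0 // => i ik.
  rewrite (_ : (i == k :> nat) = false) ?mulr0 //.
  by apply: contraNF ik => /eqP ik; apply/eqP/val_inj.
rewrite F_supp // big1 // => i _; rewrite (_ : (i == k :> nat) = false) ?mulr0 //.
by apply/negbTE; rewrite neq_ltn (leq_trans (ltn_ord i) Nk).
Qed.

Lemma cauchy_binet2 (R : comPzRingType) N (x y a b : nat -> R) :
  (\sum_(i < N) x i * a i) * (\sum_(j < N) y j * b j)
  - (\sum_(i < N) x i * b i) * (\sum_(j < N) y j * a j)
  = \sum_(j < N) \sum_(i < j) (x i * y j - x j * y i) * (a i * b j - a j * b i).
Proof.
elim: N => [|N IH]; first by rewrite !big_ord0; ring.
rewrite !big_ord_recr /= -IH.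
have -> : \sum_(i < N) (x i * y N - x N * y i) * (a i * b N - a N * b i)
  = (\sum_(i < N) x i * a i) * (y N * b N) - (\sum_(i < N) x i * b i) * (y N * a N)
    - x N * b N * (\sum_(j < N) y j * a j) + x N * a N * (\sum_(j < N) y j * b j).
  rewrite !big_distrl !big_distrr /= -!sumrB -big_split /=.
  by apply: eq_bigr => i _; ring.
ring.
Qed.

Section ProductionMatrix.
Variable R : numDomainType.
Variables P A : nat -> nat -> {poly R}.
Hypothesis P_nneg : forall i k, poly_nneg (P i k).
Hypothesis P_minor_nneg : forall i j k l, (i < j)%N -> (k < l)%N ->
  poly_nneg (P i k * P j l - P j k * P i l).
Hypothesis P_hessenberg : forall i k, (i.+1 < k)%N -> P i k = 0.
Hypothesis A_row0 : forall k, A 0 k = (k == 0)%:R.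
Hypothesis A_rowS : forall n k, A n.+1 k = \sum_(i < n.+1) A n i * P i k.

Lemma array_gt n k : (n < k)%N -> A n k = 0.
Proof.
case: n => [|n] nk; first by rewrite A_row0; case: k nk.
rewrite A_rowS big1 // => i _.
by rewrite P_hessenberg ?mulr0 // (leq_trans _ nk) // ltnS ltn_ord.
Qed.

Lemma array_rowS_widen N n k : (n < N)%N -> A n.+1 k = \sum_(i < N) A n i * P i k.
Proof.
move=> nN; rewrite A_rowS (big_ord_widen N (fun i => A n i * P i k) nN) big_mkcond.
by apply: eq_bigr => i _; case: ltnP => // ni; rewrite array_gt ?mul0r.
Qed.

Lemma array_nneg n k : poly_nneg (A n k).
Proof.
elim: n k => [|n IH] k.
  by rewrite A_row0; case: (k == 0); [apply: poly_nneg1 | apply: poly_nneg0].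
by rewrite A_rowS; apply: poly_nneg_sum => i _; apply: poly_nnegM.
Qed.

Definition minors_nneg (x y : nat -> {poly R}) :=
  forall k l, (k < l)%N -> poly_nneg (x k * y l - x l * y k).

Lemma minors_nneg_mulP N x y : minors_nneg x y ->
  minors_nneg (fun k => \sum_(i < N) x i * P i k) (fun k => \sum_(i < N) y i * P i k).
Proof.
move=> xy k l kl /=; rewrite (cauchy_binet2 N x y (P^~ k) (P^~ l)).
by do 2!apply: poly_nneg_sum => ? _; apply: poly_nnegM; [apply: xy | apply: P_minor_nneg].
Qed.

Lemma array_minors_nneg n : minors_nneg (A n) (A n.+1).
Proof.
elim: n => [|n IH] k l kl.
  rewrite [A 0 l]array_gt ?(leq_ltn_trans _ kl) // mul0r subr0.
  by apply: poly_nnegM; apply: array_nneg.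
rewrite (@array_rowS_widen n.+2 n.+1 l) // (@array_rowS_widen n.+2 n.+1 k) //.
rewrite (@array_rowS_widen n.+2 n l) // (@array_rowS_widen n.+2 n k) //.
exact: (minors_nneg_mulP n.+2 IH kl).
Qed.

Lemma array_col0_q_log_convex : q_log_convex (fun n => A n 0).
Proof.
move=> [//|m] _ /=.
have := cauchy_binet2 m.+2 (A m) (A m.+1) (fun i => (i == 0)%:R) (fun i => P i 0).
have A_supp j : (m.+2 <= j)%N -> A m j = 0 by move=> ?; apply/array_gt/ltnW.
rewrite (sum_ord_mul_delta (A_supp 0)) (sum_ord_mul_delta (@array_gt m.+1 0)).
rewrite -!array_rowS_widen // expr2 /qle -/(poly_nneg _) => ->.
apply: poly_nneg_sum => j _; apply: poly_nneg_sum => i _.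
rewrite (_ : (j == 0 :> nat) = false); last first.
  by apply/negbTE; rewrite -lt0n (leq_trans _ (ltn_ord i)).
rewrite mul0r subr0; apply: poly_nnegM; first exact: array_minors_nneg.
apply: poly_nnegM => //; case: (i == 0 :> nat); [apply: poly_nneg1 | apply: poly_nneg0].
Qed.

End ProductionMatrix.

Definition schroeder_prod (i k : nat) : {poly int} :=
  if (k <= i)%N then 1 + 'X else (k == i.+1)%:R.

Lemma schroeder_prod_nneg i k : poly_nneg (schroeder_prod i k).
Proof.
rewrite /schroeder_prod; case: ifP => _.
  exact: poly_nnegD (poly_nneg1 _) (poly_nnegX _).
by case: eqP => _; [apply: poly_nneg1 | apply: poly_nneg0].
Qed.

Lemma schroeder_prod_hessenberg i k : (i.+1 < k)%N -> schroeder_prod i k = 0.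
Proof. by move=> ik; rewrite /schroeder_prod (gtn_eqF ik) ifN //; lia. Qed.

Lemma schroeder_prod_le i k : (k <= i)%N -> schroeder_prod i k = 1 + 'X.
Proof. by rewrite /schroeder_prod => ->. Qed.

Lemma schroeder_prod_diagS i : schroeder_prod i i.+1 = 1.
Proof. by rewrite /schroeder_prod ltnn eqxx. Qed.

Lemma schroeder_prod_minor_nneg i j k l : (i < j)%N -> (k < l)%N ->
  poly_nneg (schroeder_prod i k * schroeder_prod j l
             - schroeder_prod j k * schroeder_prod i l).
Proof.
move=> ij kl; case: (ltngtP l i.+1) => li.
- by rewrite !schroeder_prod_le ?subrr; [apply: poly_nneg0 | lia ..].
- rewrite [schroeder_prod i l]schroeder_prod_hessenberg // mulr0 subr0.
  by apply: poly_nnegM; apply: schroeder_prod_nneg.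
- rewrite li schroeder_prod_diagS !schroeder_prod_le; try lia.
  rewrite (_ : _ - _ = 'X + 'X * 'X); last by ring.
  by apply: poly_nnegD; [|apply: poly_nnegM]; apply: poly_nnegX.
Qed.

Lemma schroeder_prod_subS i k :
  schroeder_prod i k - schroeder_prod i k.+1 = 'X * (i == k)%:R + (i.+1 == k)%:R.
Proof.
case: (ltngtP k i) => ki.
- have ki' := ltnW ki.
  by rewrite !schroeder_prod_le // subrr (@gtn_eqF k i.+1 ki') mulr0 addr0.
- rewrite [schroeder_prod i k.+1]schroeder_prod_hessenberg // subr0 mulr0 add0r.
  by rewrite /schroeder_prod leqNgt ki eq_sym.
- rewrite ki schroeder_prod_le // schroeder_prod_diagS (gtn_eqF (ltnSn i)).
  by rewrite addrAC subrr add0r mulr1 addr0.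
Qed.

Section DownwardRecurrence.
Variable g : nat -> nat -> {poly int}.
Hypothesis g_gt : forall n k, (n < k)%N -> g n k = 0.
Hypothesis g_rec : forall n k,
  g n.+1 k = (if k is k'.+1 then g n k' else 0) + 'X * g n k + g n.+1 k.+1.

(* Both sides vanish for k > n + 1 and, by schroeder_prod_subS, obey the same
   recurrence downwards in k. *)
Lemma schroeder_rowS n k : g n.+1 k = \sum_(i < n.+1) g n i * schroeder_prod i k.
Proof.
set S := fun k => \sum_(i < n.+1) g n i * schroeder_prod i k; change (g n.+1 k = S k).
have g_supp j : (n.+1 <= j)%N -> g n j = 0 by apply: g_gt.
have S_subS j : S j - S j.+1 = 'X * g n j + (if j is j'.+1 then g n j' else 0).
  rewrite /S -sumrB.
  under eq_bigr => i _ do rewrite -mulrBr schroeder_prod_subS mulrDr mulrCA.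
  rewrite big_split /= -mulr_sumr (sum_ord_mul_delta (g_supp _)); case: j => [|j].
    by rewrite big1 // => i _; rewrite mulr0.
  by under eq_bigr => i _ do rewrite eqSS; rewrite (sum_ord_mul_delta (g_supp _)).
move: {2}(n.+2 - k)%N (erefl (n.+2 - k)%N) => m; elim: m k => [|m IH] k km.
  rewrite g_gt /S ?big1 // => [i _|]; last by lia.
  by rewrite schroeder_prod_hessenberg ?mulr0 //; have := ltn_ord i; lia.
rewrite g_rec (IH k.+1); last by lia.
by rewrite -[S k](subrK (S k.+1)) S_subS [_ + 'X * _]addrC.
Qed.

End DownwardRecurrence.

Definition ballot (u d : nat) : int :=
  'C(u + d, d)%:R - (if d is d'.+1 then 'C(u + d, d') else 0)%:R.

Lemma ballot0 u : ballot u 0 = 1.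
Proof. by rewrite /ballot addn0 bin0 subr0. Qed.

Lemma ballotSS u d : ballot u.+1 d.+1 = ballot u d.+1 + ballot u.+1 d.
Proof.
rewrite /ballot; case: d => [|d].
  by rewrite addn1 addn0 !bin1 !bin0 -addn1 natrD; ring.
by rewrite !addSn !addnS !binS !natrD; ring.
Qed.

Lemma ballot_diagS u : ballot u u.+1 = 0.
Proof.
rewrite /ballot -(@bin_sub (u + u.+1) u) ?leq_addr //.
by rewrite (_ : (u + u.+1 - u = u.+1)%N) ?subrr //; lia.
Qed.

Lemma catalan_ballot u : (catalan u)%:R = ballot u u.
Proof.
case: u => [|u]; first by rewrite ballot0 /catalan bin0 divn1.
rewrite /catalan /ballot -addnn.
set X := 'C(u.+1 + u.+1, u.+1); set Y := 'C(u.+1 + u.+1, u).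
have XY : (u.+1 * X = u.+2 * Y)%N.
  by rewrite /X /Y (mul_bin_left (u.+1 + u.+1) u); congr (_ * _)%N; lia.
have -> : X = (u.+2 * (X - Y))%N by nia.
by rewrite mulKn // natrB //; nia.
Qed.

Definition schroeder_coef (u d j : nat) : int := 'C(u + d + j, j)%:R * ballot u d.

Lemma schroeder_coef_rec u d j : (d <= u)%N -> (0 < u + j)%N ->
  schroeder_coef u d j = (if (d < u)%N then schroeder_coef u.-1 d j else 0)
    + (if j is j'.+1 then schroeder_coef u d j' else 0)
    + (if d is d'.+1 then schroeder_coef u d' j else 0).
Proof.
rewrite /schroeder_coef; case: u => [|u] du u_j.
  have -> : d = 0%N by lia.
  by case: j u_j => [|j] //= _; rewrite !add0n !binn; ring.
case: d du => [|d] du.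
  rewrite /= !ballot0 !addn0.
  by case: j {u_j} => [|j]; rewrite ?bin0 // !addSn !addnS binS natrD; ring.
have -> : (if (d.+1 < u.+1)%N then 'C(u + d.+1 + j, j)%:R * ballot u d.+1 else 0)
    = 'C(u + d.+1 + j, j)%:R * ballot u d.+1.
  by case: ltnP => //= ud; rewrite (_ : d = u) ?ballot_diagS ?mulr0 //; lia.
rewrite ballotSS; case: j {u_j} => [|j]; first by rewrite !addn0 !bin0; ring.
by rewrite !addSn !addnS binS natrD; ring.
Qed.

(* The coefficient of q^j in T(n, h): C(2n-h-j, j) times a ballot number. *)
Definition triangle_coef (n h j : nat) : int :=
  if (h + j <= n)%N then schroeder_coef (n - j) (n - h - j) j else 0.

Lemma triangle_coef_rec n h j :
  triangle_coef n.+1 h j = (if h is h'.+1 then triangle_coef n h' j else 0)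
    + (if j is j'.+1 then triangle_coef n h j' else 0) + triangle_coef n.+1 h.+1 j.
Proof.
rewrite /triangle_coef; case: (leqP (h + j) n.+1) => hj; last first.
  by case: h hj => [|h] hj; case: j hj => [|j] hj; rewrite ?ifN ?addr0 //; lia.
rewrite (@schroeder_coef_rec (n.+1 - j) (n.+1 - h - j) j); try lia.
congr (_ + _ + _).
- case: h hj => [|h] hj; first by rewrite ifN //; lia.
  by rewrite !ifT; try lia; congr schroeder_coef; lia.
- case: j hj => [|j] hj //.
  by rewrite ifT; try lia; congr schroeder_coef; lia.
- case E: (n.+1 - h - j)%N => [|d]; first by rewrite ifN //; lia.
  by rewrite ifT; try lia; congr schroeder_coef; lia.
Qed.

Definition schroeder_triangle (n h : nat) : {poly int} :=
  \poly_(j < n.+1) triangle_coef n h j.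

Lemma coef_schroeder_triangle n h j : (schroeder_triangle n h)`_j = triangle_coef n h j.
Proof. by rewrite coef_poly; case: ltnP => // nj; rewrite /triangle_coef ifN //; lia. Qed.

Lemma schroeder_triangle_gt n h : (n < h)%N -> schroeder_triangle n h = 0.
Proof.
move=> nh; apply/polyP => j.
by rewrite coef_schroeder_triangle coef0 /triangle_coef ifN //; lia.
Qed.

Lemma schroeder_triangle_rec n h :
  schroeder_triangle n.+1 h = (if h is h'.+1 then schroeder_triangle n h' else 0)
    + 'X * schroeder_triangle n h + schroeder_triangle n.+1 h.+1.
Proof.
apply/polyP => j; rewrite !coefD coefXM !coef_schroeder_triangle triangle_coef_rec.
by case: h => [|h]; case: j => [|j]; rewrite ?coef0 ?coef_schroeder_triangle.
Qed.

Lemma schroeder_triangle_row0 k : schroeder_triangle 0 k = (k == 0)%:R.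
Proof.
apply/polyP => j; rewrite coef_schroeder_triangle coefMn coef1 /triangle_coef.
by case: k => [|k]; case: j => [|j].
Qed.

Lemma schroeder_triangle_col0 n : schroeder_triangle n 0 = qschroeder n.
Proof.
apply/polyP => j; rewrite coef_schroeder_triangle /qschroeder coef_sum big_mkord.
under eq_bigr => k _ do rewrite coefZ coefXn.
case: (leqP j n) => jn; last first.
  rewrite /triangle_coef ifN; last by lia.
  by rewrite big1 // => k _; rewrite (_ : (j == n - k)%N = false) ?mulr0 //; lia.
under eq_bigr => k _.
  rewrite (_ : (j == n - k)%N = (k == n - j :> nat)%N); last by have := ltn_ord k; lia.
  over.
rewrite (@sum_ord_mul_delta _ n.+1 (fun k => ('C(n + k, n - k) * catalan k)%:R));
  last by lia.
rewrite /triangle_coef ifT // natrM catalan_ballot /schroeder_coef subn0.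
by congr (_%:R * _); congr binomial; lia.
Qed.

Theorem corollary4p10 : q_log_convex qschroeder.
Proof.
move=> n n_gt0; rewrite -!schroeder_triangle_col0.
have rowS := schroeder_rowS schroeder_triangle_gt schroeder_triangle_rec.
exact: (array_col0_q_log_convex schroeder_prod_nneg schroeder_prod_minor_nneg
  schroeder_prod_hessenberg schroeder_triangle_row0 rowS n_gt0).
Qed.
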